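(* Let $e:\mathbb{R}^n\to\mathbb{R}^n$ and $f:\mathbb{R}^n\times\mathbb{R}^m\to\mathbb{R}^n$ be continuously differentiable and consider the implicit model $e(x_{t+1})=f(x_t,u_t)$. Suppose there exists $\epsilon>0$ with $E(x)+E(x)^\top\succ\epsilon I$ for all $x$, that $F(x,u)\ge 0$, $K(x,u)\ge 0$ and $E(x)\in\mathbb{M}^n$ for all $(x,u)$, and that $e(0)=f(0,0)$. Then the model is positive.
   Context: Consider discrete-time implicit models $e(x_{t+1})=f(x_t,u_t)$, $t=0,1,2,\dots$, with state $x_t\in\mathbb{R}^n$ and input $u_t\in\mathbb{R}^m$, where $e$ and $f$ are continuously differentiable. Write $E=\partial e/\partial x$, $F=\partial f/\partial x$, $K=\partial f/\partial u$. The model is well-posed if for every $(x_t,u_t)$ there is a unique $x_{t+1}$ satisfying the model equation. The model is positive if for all inputs with $u_t\ge0$ for all $t$ and all initial conditions $x_0\ge 0$, the resulting trajectory satisfies $x_t\ge0$ for all $t$. Inequalities between vectors/matrices are elementwise; $M\succ0$ means positive definite. $\mathbb{M}^n$ denotes the set of $n\times n$ nonsingular M-matrices: real matrices with all off-diagonal entries $\le 0$ and all eigenvalues having positive real part. *)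

From mathcomp Require Import all_boot all_algebra.
From mathcomp Require Import all_classical all_reals all_analysis.
From mathcomp Require Import complex.
Import GRing.Theory Num.Theory.
Import numFieldNormedType.Exports.
Set Implicit Arguments.
Unset Strict Implicit.
Unset Printing Implicit Defensive.
Local Open Scope ring_scope.

Section Defs.
Variable R : realType.

Definition C1 n m (g : 'rV[R]_n -> 'rV[R]_m) : Prop :=
  (forall x, differentiable g x) /\ continuous (jacobian g).

(* Standard (m x n) Jacobian matrix dg/dx at x: entry (i,j) = d g_i / d x_j.
   (MathComp-Analysis' [jacobian] uses the transposed, row-vector convention.) *)
Definition Jac n m (g : 'rV[R]_n -> 'rV[R]_m) (x : 'rV[R]_n) : 'M[R]_(m, n) :=
  (jacobian g x)^T.

Definition uncurry_rV n m (f : 'rV[R]_n -> 'rV[R]_m -> 'rV[R]_n)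
  : 'rV[R]_(n + m) -> 'rV[R]_n := fun z => f (lsubmx z) (rsubmx z).

Definition Emx n (e : 'rV[R]_n -> 'rV[R]_n) x : 'M[R]_n := Jac e x.
Definition Fmx n m (f : 'rV[R]_n -> 'rV[R]_m -> 'rV[R]_n) x u : 'M[R]_n :=
  Jac (fun y => f y u) x.
Definition Kmx n m (f : 'rV[R]_n -> 'rV[R]_m -> 'rV[R]_n) x u : 'M[R]_(n, m) :=
  Jac (fun v => f x v) u.

Definition posdef n (A : 'M[R]_n) : Prop :=
  forall v : 'rV[R]_n, v != 0 -> 0 < (v *m A *m v^T) 0 0.

Definition nonneg_mx p q (A : 'M[R]_(p, q)) : Prop := forall i j, 0 <= A i j.

Definition Mmatrix n (A : 'M[R]_n) : Prop :=
  (forall i j : 'I_n, i != j -> A i j <= 0) /\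
  (forall z : R[i], eigenvalue (map_mx (real_complex R) A) z -> 0 < complex.Re z).

Definition positive_model n m (e : 'rV[R]_n -> 'rV[R]_n)
  (f : 'rV[R]_n -> 'rV[R]_m -> 'rV[R]_n) : Prop :=
  forall (x : nat -> 'rV[R]_n) (u : nat -> 'rV[R]_m),
    (forall t, e (x t.+1) = f (x t) (u t)) ->
    (forall t, nonneg_mx (u t)) ->
    nonneg_mx (x 0%N) ->
    forall t, nonneg_mx (x t).

End Defs.

(* By induction on t it suffices to show: if x_t >= 0 and u_t >= 0 then
   x_{t+1} >= 0.  Two monotonicity facts, both obtained from the mean value
   theorem along segments, give this:
   - forward monotonicity of f: since F = df/dx >= 0 and K = df/du >= 0,
     f(x, u) >= f(0, 0) = e(0) on the nonnegative orthant
     ([partial_nonneg_dominates_origin]);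
   - inverse nonnegativity of e: if E + E^T is positive definite and the
     off-diagonal entries of E are nonpositive (part of the M-matrix
     hypothesis), then e(y) >= e(0) implies y >= 0 ([inverse_nonneg]).  The
     proof splits y into positive and negative parts and pairs the mean value
     theorem with the negative part, playing the definiteness of E against
     its Z-matrix sign pattern. *)

From mathcomp Require Import all_boot all_algebra.
From mathcomp Require Import all_classical all_reals all_analysis.
From HB Require Import structures.
From mathcomp Require Import lra.
Import order.Order.TTheory GRing.Theory Num.Theory.
Import numFieldNormedType.Exports.
Local Open Scope ring_scope.
Set Implicit Arguments.
Unset Strict Implicit.

Section MeanValue.
Variable R : realType.

Definition pairing n (c v : 'rV[R]_n) : R := (v *m c^T) 0 0.

Lemma pairingE n (c v : 'rV[R]_n) : pairing c v = \sum_j v 0 j * c 0 j.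
Proof. by rewrite /pairing mxE; apply: eq_bigr => j _; rewrite mxE. Qed.

Lemma pairing_delta n (j : 'I_n) (v : 'rV[R]_n) : pairing (delta_mx 0 j) v = v 0 j.
Proof.
rewrite pairingE (bigD1 j) //= mxE !eqxx mulr1 big1 ?addr0 // => k /negbTE kj.
by rewrite mxE kj andbF mulr0.
Qed.

Lemma pairing_linear n (c : 'rV[R]_n) : linear (pairing c).
Proof. by move=> a u v; rewrite /pairing mulmxDl -scalemxAl !mxE. Qed.

Lemma pairing_differentiable n (c v : 'rV[R]_n) : differentiable (pairing c) v.
Proof.
have -> : pairing c = \sum_k ((c 0 k) *: (fun w : 'rV[R]_n => w 0 k)).
  apply/funext => w; rewrite pairingE fct_sumE; apply: eq_bigr => k _.
  by rewrite /= mulrC.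
apply: differentiable_sum => k; apply: differentiableZ.
exact: differentiable_coord.
Qed.

Lemma mean_value_pairing n k (g : 'rV[R]_n -> 'rV[R]_k)
    (dg : forall z, differentiable g z) (a v : 'rV[R]_n) (c : 'rV[R]_k) :
  exists2 s, s \in `]0, 1[%R &
    pairing c (g (a + v)) - pairing c (g a) = pairing c ('d g (a + s *: v) v).
Proof.
pose L : {linear 'rV[R]_k -> R} :=
  HB.pack (pairing c) (GRing.isLinear.Build _ _ _ _ _ (pairing_linear c)).
have L_cont : continuous L.
  by move=> w; apply: differentiable_continuous; exact: pairing_differentiable.
pose p := (cst a + *:%R^~ v : R -> 'rV[R]_n).
(* registers the derivative of the segment for [diff_val] *)
have p_diff s : is_diff s p (0 + *:%R^~ v) by apply: is_diffD.
pose phi := pairing c \o g \o p.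
have dgc z : differentiable (pairing c \o g) z.
  by apply: differentiable_comp; [exact: dg | exact: pairing_differentiable].
have dphi s : differentiable phi s.
  by apply: differentiable_comp; [exact: ex_diff | exact: dgc].
have phi' s : 'd phi s 1 = pairing c ('d g (a + s *: v) v).
  rewrite diff_comp; [|exact: ex_diff|exact: dgc].
  rewrite diff_comp; [|exact: dg|exact: pairing_differentiable].
  by rewrite (diff_lin (g (p s)) L_cont) /= diff_val /= add0r scale1r.
have phi_deriv (s : R) : s \in `]0, 1[%R -> is_derive s 1 phi ('d phi s 1).
  move=> _; have := derivableP (diff_derivable (v := 1 : R) (dphi s)).
  by rewrite deriveE.
have phi_cont : {within `[0, 1], continuous phi}%classic.
  by apply: continuous_subspaceT => s; exact: differentiable_continuous.
have [s s01 hs] := MVT ltr01 phi_deriv phi_cont.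
exists s => //; move: hs.
by rewrite subr0 mulr1 phi' /phi /p /= !fctE scale0r scale1r addr0.
Qed.

Lemma diff_coordE n k (g : 'rV[R]_n -> 'rV[R]_k) z v j :
  ('d g z v) 0 j = \sum_i v 0 i * Jac g z j i.
Proof.
rewrite -(mul_rV_lin1 ('d g z) v) mxE.
by apply: eq_bigr => i _; rewrite /Jac /jacobian !mxE.
Qed.

Lemma pairing_diffE n k (g : 'rV[R]_n -> 'rV[R]_k) z v (c : 'rV[R]_k) :
  pairing c ('d g z v) = (v *m (Jac g z)^T *m c^T) 0 0.
Proof. by rewrite /pairing -(mul_rV_lin1 ('d g z) v) /Jac trmxK. Qed.

Lemma mean_value_coord n k (g : 'rV[R]_n -> 'rV[R]_k)
    (dg : forall z, differentiable g z) (a v : 'rV[R]_n) j :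
  exists z, g (a + v) 0 j - g a 0 j = \sum_i v 0 i * Jac g z j i.
Proof.
have [s _] := mean_value_pairing dg a v (delta_mx 0 j).
by rewrite !pairing_delta diff_coordE; exists (a + s *: v).
Qed.

Lemma nonneg_jacobian_monotone n k (g : 'rV[R]_n -> 'rV[R]_k)
    (dg : forall z, differentiable g z) (Jg : forall z, nonneg_mx (Jac g z))
    (a v : 'rV[R]_n) :
  nonneg_mx v -> forall j, g a 0 j <= g (a + v) 0 j.
Proof.
move=> v_ge0 j; rewrite -subr_ge0.
have [z ->] := mean_value_coord dg a v j.
by apply: sumr_ge0 => i _; apply: mulr_ge0; [exact: v_ge0 | exact: Jg].
Qed.

Lemma differentiable_affine p q (B : 'M[R]_(p, q)) (w : 'rV[R]_q) y :
  differentiable (fun z : 'rV[R]_p => z *m B + w) y.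
Proof.
have -> : (fun z : 'rV[R]_p => z *m B + w) =
    (\sum_i (fun z : 'rV[R]_p => z 0 i *: row i B)) + cst w.
  by apply/funext => z; rewrite /= fct_sumE mulmx_sum_row.
apply: differentiableD; last exact: differentiable_cst.
apply: differentiable_sum => i; apply: differentiableZl.
exact: differentiable_coord.
Qed.

End MeanValue.

Section PartialMaps.
Variables (R : realType) (n m : nat) (f : 'rV[R]_n -> 'rV[R]_m -> 'rV[R]_n).
Hypothesis df : forall z, differentiable (uncurry_rV f) z.

(* Each partial map of f is the composite of the jointly differentiable
   uncurried map with an affine embedding, hence differentiable. *)
Lemma differentiable_partial_state u x : differentiable (fun y => f y u) x.
Proof.
have -> : (fun y => f y u) = uncurry_rV f \o
    (fun y => y *m row_mx (1%:M : 'M[R]_n) (0 : 'M[R]_(n, m)) + row_mx 0 u).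
  apply/funext => y; rewrite /uncurry_rV /= mul_mx_row mulmx1 mulmx0.
  by rewrite add_row_mx addr0 add0r row_mxKl row_mxKr.
by apply: differentiable_comp => //; exact: differentiable_affine.
Qed.

Lemma differentiable_partial_input x u : differentiable (f x) u.
Proof.
have -> : f x = uncurry_rV f \o
    (fun v => v *m row_mx (0 : 'M[R]_(m, n)) (1%:M : 'M[R]_m) + row_mx x 0).
  apply/funext => v; rewrite /uncurry_rV /= mul_mx_row mulmx1 mulmx0.
  by rewrite add_row_mx addr0 add0r row_mxKl row_mxKr.
by apply: differentiable_comp => //; exact: differentiable_affine.
Qed.

(* With F = df/dx >= 0 and K = df/du >= 0, f dominates f(0, 0) on the
   nonnegative orthant: move from (0, 0) to (0, u), then to (x, u). *)
Lemma partial_nonneg_dominates_origin :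
  (forall x u, nonneg_mx (Fmx f x u)) -> (forall x u, nonneg_mx (Kmx f x u)) ->
  forall x u, nonneg_mx x -> nonneg_mx u -> forall j, f 0 0 0 j <= f x u 0 j.
Proof.
move=> F_ge0 K_ge0 x u x_ge0 u_ge0 j.
have input_step : f 0 0 0 j <= f 0 u 0 j.
  have := nonneg_jacobian_monotone (differentiable_partial_input 0) (K_ge0 0) 0
    u_ge0 j.
  by rewrite add0r.
have state_step : f 0 u 0 j <= f x u 0 j.
  have := nonneg_jacobian_monotone (differentiable_partial_state u) (F_ge0^~ u) 0
    x_ge0 j.
  by rewrite add0r.
exact: le_trans input_step state_step.
Qed.

End PartialMaps.

Section QuadraticForms.
Variables (R : realType) (n : nat).
Implicit Types (A B : 'M[R]_n) (v : 'rV[R]_n).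

Definition quad v A : R := (v *m A *m v^T) 0 0.

Lemma quad_trmx v A : quad v A^T = quad v A.
Proof.
have trE (M : 'M[R]_1) : M 0 0 = M^T 0 0 by rewrite mxE.
by rewrite /quad trE !trmx_mul !trmxK mulmxA.
Qed.

Lemma quadD v A B : quad v (A + B) = quad v A + quad v B.
Proof. by rewrite /quad mulmxDr mulmxDl mxE. Qed.

Lemma quadB v A B : quad v (A - B) = quad v A - quad v B.
Proof. by rewrite /quad mulmxBr mulmxBl !mxE. Qed.

Lemma quad_scalar v (a : R) : quad v a%:M = a * (v *m v^T) 0 0.
Proof. by rewrite /quad mul_mx_scalar -scalemxAl mxE. Qed.

Lemma norm2_ge0 v : 0 <= (v *m v^T) 0 0.
Proof. by rewrite mxE; apply: sumr_ge0 => j _; rewrite mxE; exact: sqr_ge0. Qed.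

Lemma posdef_sub_scalar A (eps : R) : 0 <= eps -> posdef (A - eps%:M) -> posdef A.
Proof.
move=> eps_ge0 pdA v v_neq0; have := pdA v v_neq0.
rewrite -/(quad v _) quadB quad_scalar /quad.
have := mulr_ge0 eps_ge0 (norm2_ge0 v); lra.
Qed.

(* Only the symmetric part of A contributes to its quadratic form. *)
Lemma posdef_symmetric_part A v : posdef (A + A^T) -> v != 0 -> 0 < quad v A.
Proof.
move=> pdA /pdA; rewrite -/(quad v _) quadD quad_trmx; lra.
Qed.

End QuadraticForms.

Section InverseMonotone.
Variables (R : realType) (n : nat).
Implicit Types (y : 'rV[R]_n).

Definition pos_part y : 'rV[R]_n := \row_j Num.max (y 0 j) 0.
Definition neg_part y : 'rV[R]_n := \row_j Num.max (- y 0 j) 0.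

Lemma pos_part_ge0 y : nonneg_mx (pos_part y).
Proof. by move=> i j; rewrite mxE le_max lexx orbT. Qed.

Lemma neg_part_ge0 y : nonneg_mx (neg_part y).
Proof. by move=> i j; rewrite mxE le_max lexx orbT. Qed.

Lemma add_neg_part y : y + neg_part y = pos_part y.
Proof.
apply/rowP => j; rewrite !mxE.
by case: (lerP (y 0 j) 0) => hy; case: lerP => hy'; lra.
Qed.

Lemma pos_part_complement y j : neg_part y 0 j != 0 -> pos_part y 0 j = 0.
Proof. by rewrite !mxE; case: (lerP (y 0 j) 0) => hy; case: lerP; lra. Qed.

Variable e : 'rV[R]_n -> 'rV[R]_n.
Hypothesis de : forall z, differentiable e z.
Hypothesis Jac_offdiag : forall z i j, i != j -> Jac e z i j <= 0.

Lemma Zmatrix_coord_decrease p j :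
  nonneg_mx p -> p 0 j = 0 -> e p 0 j <= e 0 0 j.
Proof.
move=> p_ge0 pj0; rewrite -subr_le0 -{1}[p]add0r.
have [z ->] := mean_value_coord de 0 p j.
apply: sumr_le0 => k _; case: (eqVneq k j) => [->|kj]; first by rewrite pj0 mul0r.
by apply: mulr_ge0_le0; [exact: p_ge0 | apply: Jac_offdiag; rewrite eq_sym].
Qed.

Hypothesis Jac_posdef : forall z, posdef (Jac e z + (Jac e z)^T).

(* e is inverse nonnegative with respect to e(0): e(0) <= e(y) forces y >= 0.
   If the negative part w of y were nonzero, the mean value theorem along
   [y, y + w] paired with w would give <w, e(y+w) - e(y)> > 0, whereas on the
   support of w the positive part y + w vanishes, so by the Z-matrix condition
   e(y+w)_j <= e(0)_j <= e(y)_j there. *)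
Lemma inverse_nonneg y : (forall j, e 0 0 j <= e y 0 j) -> nonneg_mx y.
Proof.
move=> ey_ge; set p := pos_part y; set w := neg_part y.
case: (eqVneq w 0) => [w0 | w_neq0].
  have := add_neg_part y; rewrite -/w w0 addr0 => ->; exact: pos_part_ge0.
have [s _] := mean_value_pairing de y w w; rewrite add_neg_part -/p => hs.
have increase : 0 < pairing w ('d e (y + s *: w) w).
  by rewrite pairing_diffE -/(quad _ _) quad_trmx; exact: posdef_symmetric_part.
have decrease : pairing w (e p) - pairing w (e y) <= 0.
  rewrite !pairingE -sumrB; apply: sumr_le0 => j _; rewrite -mulrBl.
  have [->|wj] := eqVneq (w 0 j) 0; first by rewrite mulr0.
  apply: mulr_le0_ge0; last exact: neg_part_ge0.
  rewrite subr_le0; apply: le_trans (ey_ge j).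
  exact: Zmatrix_coord_decrease (pos_part_ge0 y) (pos_part_complement wj).
by move: decrease; rewrite hs leNgt increase.
Qed.

End InverseMonotone.

Theorem theorem1 (R : realType) (n m : nat)
  (e : 'rV[R]_n -> 'rV[R]_n) (f : 'rV[R]_n -> 'rV[R]_m -> 'rV[R]_n) :
  C1 e -> C1 (uncurry_rV f) ->
  (exists eps : R, 0 < eps /\
     forall x, posdef (Emx e x + (Emx e x)^T - eps%:M)) ->
  (forall x u, nonneg_mx (Fmx f x u)) ->
  (forall x u, nonneg_mx (Kmx f x u)) ->
  (forall x, Mmatrix (Emx e x)) ->
  e 0 = f 0 0 ->
  positive_model e f.
Proof.
move=> [de _] [df _] [eps [eps_gt0 E_posdef]] F_ge0 K_ge0 E_Mmatrix e0.
move=> x u x_step u_ge0 x0_ge0; elim=> [//|t IH].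
apply: (inverse_nonneg de) => [z i j ij | z | j].
- exact: (E_Mmatrix z).1.
- exact: posdef_sub_scalar (ltW eps_gt0) (E_posdef z).
- by rewrite x_step e0; exact: partial_nonneg_dominates_origin.
Qed.
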